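(* The $\Sigma_1$-theory $\mathcal{T}_\varsigma$ is stably infinite with respect to $\{\sigma\}$.
   Context: $\varsigma:\mathbb{N}\to\mathbb{N}$ is the Busy Beaver function: $\varsigma(n)$ is the maximum number of $1$'s that a halting Turing machine with at most $n$ states can leave on its tape, starting from an all-$0$ tape (so $\varsigma(0)=0,\varsigma(1)=1,\varsigma(2)=4,\varsigma(3)=6,\varsigma(4)=13$). $\Sigma_1$ is the empty signature (only equality, interpreted as identity) with one sort $\sigma$. Let $\psi_{\ge n}=\exists x_1\dots x_n.\bigwedge_{1\le i<j\le n}\neg(x_i=x_j)$, $\psi_{\le n}=\exists x_1\dots x_n\forall y.\bigvee_{i=1}^n y=x_i$, $\psi_{=n}=\psi_{\ge n}\wedge\psi_{\le n}$. $\mathcal{T}_\varsigma$ is the $\Sigma_1$-theory (class of all $\Sigma_1$-interpretations satisfying the axioms) axiomatized by $\{\psi_{\ge\varsigma(k+2)}\vee\bigvee_{i=2}^{k+2}\psi_{=\varsigma(i)}:k\in\mathbb{N}\}$; its models are exactly those whose domain is infinite or has cardinality $\varsigma(k)$ for some $k\ge2$. A theory $\mathcal{T}$ is stably infinite w.r.t. $\{\sigma\}$ if every quantifier-free formula satisfied by some $\mathcal{T}$-interpretation is satisfied by some $\mathcal{T}$-interpretation with infinite domain. *)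

From Stdlib Require Import List Arith ClassicalEpsilon.
Import ListNotations.

(* A transition: symbol to write, direction (true = right, false = left),
   next state (None = halt). Only the values on states q < n matter. *)
Definition machine := nat -> bool -> (bool * bool * option nat).

Definition valid_machine (n : nat) (M : machine) : Prop :=
  forall q b, q < n ->
    match snd (M q b) with Some q' => q' < n | None => True end.

(* configuration: current state (None = halted), tape left of head
   (nearest cell first), head symbol, tape right of head (nearest first);
   cells not stored are 0 (false). *)
Record config := Config
  { cstate : option nat; cleft : list bool; chead : bool; cright : list bool }.

Definition step (M : machine) (c : config) : config :=
  match cstate c with
  | None => c
  | Some q =>
      let '(w, dir, nq) := M q (chead c) in
      if dir then
        match cright c with
        | [] => Config nq (w :: cleft c) false []
        | h :: r => Config nq (w :: cleft c) h r
        end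
      else
        match cleft c with
        | [] => Config nq [] false (w :: cright c)
        | h :: l => Config nq l h (w :: cright c)
        end
  end.

Definition init_config (n : nat) : config :=
  Config (if n =? 0 then None else Some 0) [] false [].

Definition count_ones (l : list bool) : nat := length (filter (fun b => b) l).

Definition ones (c : config) : nat :=
  count_ones (cleft c) + (if chead c then 1 else 0) + count_ones (cright c).

Definition halts_with (n : nat) (M : machine) (m : nat) : Prop :=
  exists t, cstate (Nat.iter t (step M) (init_config n)) = None /\
            ones (Nat.iter t (step M) (init_config n)) = m.

Definition is_bb_value (n m : nat) : Prop :=
  (exists M, valid_machine n M /\ halts_with n M m) /\
  (forall M m', valid_machine n M -> halts_with n M m' -> m' <= m).

(* varsigma n : the maximum number of 1's left by a halting machine with
   at most n states (the maximum exists, so this choice is determined). *)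
Definition varsigma (n : nat) : nat :=
  epsilon (inhabits 0) (is_bb_value n).

Inductive formula : Type :=
| FTrue : formula
| FFalse : formula
| FEq : nat -> nat -> formula
| FNot : formula -> formula
| FAnd : formula -> formula -> formula
| FOr : formula -> formula -> formula
| FEx : nat -> formula -> formula
| FAll : nat -> formula -> formula.

Definition update {D : Type} (e : nat -> D) (x : nat) (d : D) : nat -> D :=
  fun y => if y =? x then d else e y.

Fixpoint sat {D : Type} (e : nat -> D) (f : formula) : Prop :=
  match f with
  | FTrue => True
  | FFalse => False
  | FEq x y => e x = e y
  | FNot g => ~ sat e g
  | FAnd g h => sat e g /\ sat e h
  | FOr g h => sat e g \/ sat e h
  | FEx x g => exists d : D, sat (update e x d) g
  | FAll x g => forall d : D, sat (update e x d) g
  end.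

Fixpoint quantifier_free (f : formula) : Prop :=
  match f with
  | FTrue | FFalse | FEq _ _ => True
  | FNot g => quantifier_free g
  | FAnd g h | FOr g h => quantifier_free g /\ quantifier_free h
  | FEx _ _ | FAll _ _ => False
  end.

Definition bigAnd (l : list formula) : formula := fold_right FAnd FTrue l.
Definition bigOr (l : list formula) : formula := fold_right FOr FFalse l.
Definition exists_many (xs : list nat) (f : formula) : formula :=
  fold_right FEx f xs.

(* variables x_1..x_n are 1..n; y is 0 *)
Definition psi_ge (n : nat) : formula :=
  exists_many (seq 1 n)
    (bigAnd (flat_map (fun i => map (fun j => FNot (FEq i j)) (seq (S i) (n - i)))
                      (seq 1 n))).

Definition psi_le (n : nat) : formula :=
  exists_many (seq 1 n) (FAll 0 (bigOr (map (fun i => FEq 0 i) (seq 1 n)))).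

Definition psi_eq (n : nat) : formula := FAnd (psi_ge n) (psi_le n).

Definition T_axiom (k : nat) : formula :=
  FOr (psi_ge (varsigma (k + 2)))
      (bigOr (map (fun i => psi_eq (varsigma i)) (seq 2 (S k)))).

(* A Sigma_1-interpretation: a (nonempty) domain D with values e for the
   variables. A theory is a class of interpretations. *)
Definition theory := forall D : Type, (nat -> D) -> Prop.

Definition T_varsigma : theory := fun D e => forall k, sat e (T_axiom k).

Definition infinite_type (D : Type) : Prop :=
  forall l : list D, exists d, ~ In d l.

Definition stably_infinite (T : theory) : Prop :=
  forall phi : formula, quantifier_free phi ->
    (exists (D : Type) (e : nat -> D), T D e /\ sat e phi) ->
    exists (D : Type) (e : nat -> D), T D e /\ infinite_type D /\ sat e phi.

(* Every infinite domain satisfies each psi_{>= n}, hence every axiom of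
   T_varsigma, whatever the values of varsigma are.  Given a model D of a
   quantifier-free phi, the domain D + nat is infinite, and phi still holds
   there under the embedding inl, because quantifier-free formulas are
   preserved and reflected by injective maps of the domain. *)

From Stdlib Require Import List Arith Lia FinFun Classical.
Import ListNotations.

Lemma sat_qf_injective {D D' : Type} (f : D -> D') (f_inj : Injective f)
  (e : nat -> D) (phi : formula) :
  quantifier_free phi -> (sat e phi <-> sat (fun x => f (e x)) phi).
Proof.
  induction phi; simpl; intros Hqf; try tauto.
  split; [intros ->; reflexivity | apply f_inj].
Qed.

Fixpoint update_many {D : Type} (e : nat -> D) (xs : list nat) (g : nat -> D)
  : nat -> D :=
  match xs with
  | [] => e
  | x :: xs' => update_many (update e x (g x)) xs' g
  end.

Lemma sat_exists_many {D : Type} (xs : list nat) (g : nat -> D) (f : formula) :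
  forall e, sat (update_many e xs g) f -> sat e (exists_many xs f).
Proof.
  induction xs as [|x xs IH]; simpl; intros e H; [exact H|].
  exists (g x). apply IH, H.
Qed.

Lemma update_many_notin {D : Type} (xs : list nat) (g : nat -> D) :
  forall e y, ~ In y xs -> update_many e xs g y = e y.
Proof.
  induction xs as [|x xs IH]; simpl; intros e y Hy; [reflexivity|].
  rewrite IH by tauto. unfold update.
  destruct (Nat.eqb_spec y x); [subst; tauto | reflexivity].
Qed.

Lemma update_many_in {D : Type} (xs : list nat) (g : nat -> D) :
  forall e y, In y xs -> update_many e xs g y = g y.
Proof.
  induction xs as [|x xs IH]; simpl; intros e y Hy; [contradiction|].
  destruct (in_dec Nat.eq_dec y xs) as [Hin|Hnotin]; [now apply IH|].
  rewrite update_many_notin by exact Hnotin. unfold update.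
  destruct Hy as [<-|Hy]; [now rewrite Nat.eqb_refl | contradiction].
Qed.

Lemma sat_bigAnd {D : Type} (e : nat -> D) (l : list formula) :
  (forall f, In f l -> sat e f) -> sat e (bigAnd l).
Proof.
  induction l as [|f l IH]; simpl; intros H; auto.
Qed.

Section NatInjection.

Variables (D : Type) (g : nat -> D).
Hypothesis g_inj : Injective g.

(* The witnesses for x_1, ..., x_n are g 1, ..., g n. *)
Lemma sat_psi_ge_of_injective (e : nat -> D) (n : nat) : sat e (psi_ge n).
Proof.
  apply sat_exists_many with (g := g), sat_bigAnd.
  intros f Hf.
  apply in_flat_map in Hf as [i [Hi Hf]].
  apply in_map_iff in Hf as [j [<- Hj]].
  apply in_seq in Hi. apply in_seq in Hj.
  simpl. rewrite !update_many_in by (apply in_seq; lia).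
  intros Hgij. apply g_inj in Hgij. lia.
Qed.

Lemma T_varsigma_of_injective (e : nat -> D) : T_varsigma D e.
Proof.
  intros k. left. apply sat_psi_ge_of_injective.
Qed.

(* Pigeonhole: g 0, ..., g (length l) are length l + 1 distinct elements. *)
Lemma infinite_of_injective : infinite_type D.
Proof.
  intros l. apply not_all_not_ex. intros Hall.
  assert (Hincl : incl (map g (seq 0 (S (length l)))) l)
    by (intros d _; apply NNPP, Hall).
  apply NoDup_incl_length in Hincl.
  - rewrite length_map, length_seq in Hincl. lia.
  - apply Injective_map_NoDup; [exact g_inj | apply seq_NoDup].
Qed.

End NatInjection.

Lemma Injective_inr (A B : Type) : Injective (@inr A B).
Proof. intros x y H; now injection H. Qed.

Lemma Injective_inl (A B : Type) : Injective (@inl A B).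
Proof. intros x y H; now injection H. Qed.

Theorem lemma49 : stably_infinite T_varsigma.
Proof.
  intros phi Hqf [D [e [_ Hphi]]].
  exists (D + nat)%type, (fun x => inl (e x)).
  split; [|split].
  - apply T_varsigma_of_injective with (g := inr), Injective_inr.
  - apply infinite_of_injective with (g := inr), Injective_inr.
  - apply (sat_qf_injective inl (Injective_inl D nat)); assumption.
Qed.
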